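(* For every combinatorial auction with $d$-SOS valuations ($d\ge1$) over single-dimensional signals $s_i\in\{0,1,\dots,k-1\}$ ($k\ge2$), the mechanism that runs Random Threshold with probability $\frac{(k-1)d}{d(k+1)+2}$ and Random Sampling otherwise is universally ex-post IC-IR and gives a $(d(k+1)+2)$-approximation to the optimal social welfare.
   Context: Setting: $n$ agents, $m$ items; agent $i$ has private signal $s_i$; value for bundle $T$ is $v_{iT}(\mathbf{s})\ge0$, public, weakly increasing in each coordinate, strictly in $s_i$; each $v_{iT}$ is $d$-SOS: for every coordinate $j$, $s_j$, $\delta\ge0$, $\mathbf{s}'_{-j}\le\mathbf{s}_{-j}$ coordinate-wise, $d\big(v(\mathbf{s}'_{-j},s_j+\delta)-v(\mathbf{s}'_{-j},s_j)\big)\ge v(\mathbf{s}_{-j},s_j+\delta)-v(\mathbf{s}_{-j},s_j)$. Allocations assign disjoint bundles. Random Threshold: choose $\ell$ uniformly in $\{1,\dots,k-1\}$; $N_{\ge\ell}=\{i:s_i\ge\ell\}$, $N_{<\ell}$ the rest; for $i\in N_{\ge\ell}$, $\bar v_{iT}=v_{iT}(\mathbf{s}_{N_{<\ell}},\boldsymbol{\ell}_{N_{\ge\ell}})$, else $0$; allocate a $\bar v$-welfare-maximizing allocation among $N_{\ge\ell}$; agent receiving $\bar T_i$ pays $v_{i\bar T_i}(\mathbf{s}_{-i},\ell-1)$. Random Sampling: split agents uniformly at random into $A,B$; for $i\in B$, $\tilde v_{iT}=v_{iT}(\mathbf{s}_A,\mathbf{0}_B)$, for $i\in A$, $0$; allocate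 a $\tilde v$-welfare-maximizing allocation among $B$; no payments. *)

From HB Require Import structures.
From mathcomp Require Import all_boot all_order all_algebra.
Set Implicit Arguments. Unset Strict Implicit. Unset Printing Implicit Defensive.
Import Order.TTheory GRing.Theory Num.Theory.
Local Open Scope ring_scope.

Section Auction.
Variables (R : realFieldType) (n m : nat).

(* A (reported or true) signal profile; signals are naturals, the signal
   space {0,...,k-1} is enforced by [in_range k]. *)
Definition profile := {ffun 'I_n -> nat}.
Definition in_range (k : nat) (s : profile) := forall i, (s i < k)%N.
Definition upd (s : profile) (j : 'I_n) (x : nat) : profile :=
  [ffun i => if i == j then x else s i].

Definition valuation := 'I_n -> {set 'I_m} -> profile -> R.

Definition allocation := {ffun 'I_n -> {set 'I_m}}.
Definition feasible (N : {set 'I_n}) (X : allocation) :=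
  (forall i, i \notin N -> X i = set0) /\
  (forall i j, i != j -> [disjoint X i & X j]).
Definition welfare (u : 'I_n -> {set 'I_m} -> R) (X : allocation) : R :=
  \sum_i u i (X i).

(* A (deterministic) tie-breaking rule picking an allocation among N
   given the valuations u; it must be welfare maximizing. *)
Definition selector := {set 'I_n} -> ('I_n -> {set 'I_m} -> R) -> allocation.
Definition welfare_maximizer (sel : selector) :=
  forall N u, feasible N (sel N u) /\
    (forall X, feasible N X -> welfare u X <= welfare u (sel N u)).

Definition nonneg_val (k : nat) (v : valuation) :=
  forall i T s, in_range k s -> 0 <= v i T s.
Definition empty_zero (v : valuation) := forall i s, v i set0 s = 0.
Definition monotone_val (k : nat) (v : valuation) :=
  forall i T s j x y, in_range k s -> (x <= y < k)%N ->
    v i T (upd s j x) <= v i T (upd s j y).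
Definition strict_own (k : nat) (v : valuation) :=
  forall i T s x y, T != set0 -> in_range k s -> (x < y < k)%N ->
    v i T (upd s i x) < v i T (upd s i y).
(* d-SOS: with x = s_j and y = s_j + delta *)
Definition SOS (k : nat) (d : R) (v : valuation) :=
  forall i T s s' j x y, in_range k s -> in_range k s' ->
    (forall l, l != j -> (s' l <= s l)%N) -> (x <= y < k)%N ->
    v i T (upd s j y) - v i T (upd s j x) <=
      d * (v i T (upd s' j y) - v i T (upd s' j x)).

Definition outcome := (allocation * {ffun 'I_n -> R})%type.
Definition mechanism := profile -> outcome.

Definition random_threshold (sel : selector) (v : valuation) (l : nat) : mechanism :=
  fun r =>
  let N := [set i | (l <= r i)%N] in
  let pl := [ffun i => if (l <= r i)%N then l else r i] : profile in
  let vbar := fun j T => if j \in N then v j T pl else 0 in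
  let X := sel N vbar in
  (X, [ffun i => if i \in N then v i (X i) (upd r i l.-1) else 0]).

Definition random_sampling (sel : selector) (v : valuation) (A : {set 'I_n}) : mechanism :=
  fun r =>
  let q := [ffun i => if i \in A then r i else 0%N] : profile in
  let vt := fun j T => if j \in ~: A then v j T q else 0 in
  (sel (~: A) vt, [ffun => 0]).

Definition utility (v : valuation) (s : profile) (i : 'I_n) (o : outcome) : R :=
  v i (o.1 i) s - o.2 i.
Definition social_welfare (v : valuation) (s : profile) (o : outcome) : R :=
  \sum_i v i (o.1 i) s.

Definition ex_post_IC_IR (k : nat) (v : valuation) (M : mechanism) :=
  forall s, in_range k s -> forall i,
    0 <= utility v s i (M s) /\
    (forall x, (x < k)%N -> utility v s i (M (upd s i x)) <= utility v s i (M s)).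

Definition prob_RT (k : nat) (d : R) : R :=
  ((k.-1)%:R * d) / (d * (k.+1)%:R + 2).

(* expected welfare of the mixture: l uniform in {1..k-1}, A uniform subset *)
Definition expected_welfare (sel : selector) (v : valuation) (k : nat) (d : R)
    (s : profile) : R :=
  prob_RT k d * ((k.-1)%:R^-1 *
     \sum_(1 <= l < k) social_welfare v s (random_threshold sel v l s))
  + (1 - prob_RT k d) * ((2 ^+ n)^-1 *
     \sum_(A : {set 'I_n}) social_welfare v s (random_sampling sel v A s)).

End Auction.

From HB Require Import structures.
From mathcomp Require Import all_boot all_order all_algebra.
From mathcomp Require Import zify ring lra.
Set Implicit Arguments. Unset Strict Implicit. Unset Printing Implicit Defensive.
Import Order.TTheory GRing.Theory Num.Theory.
Local Open Scope ring_scope.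

(* Under Random Threshold with threshold l, the allocation only
   depends on which agents report at least l, and a served agent pays her
   value at signal l-1; monotonicity makes truth-telling optimal and the
   utility nonnegative.  Random Sampling ignores the reports of the agents it
   may serve and charges nothing.

   For any feasible X, split v_i(X_i; s) into its "own part"
   v_i(X_i; s) - v_i(X_i; s_{-i}, 0) and its "base" v_i(X_i; s_{-i}, 0).
   - The own part telescopes over l in [1, k) into one-step increments; by
     d-SOS each increment at l is at most d times the value of agent i in the
     threshold-l instance, so the own parts total at most d times the
     threshold welfare summed over l.
   - For the base, d-SOS applied to two complementary halves (A, ~A) of the
     other agents yields 2 v_i(s_{-i},0) <= (d+1) (v_i(s_A, 0) + v_i(s_~A, 0));
     averaging over samples A bounds the bases by the sampling welfare.
   The two halves combine to the claimed ratio by a field computation. *)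

Section Profiles.
Variables (n k : nat).

Lemma upd_id (s : profile n) j : upd s j (s j) = s.
Proof. by apply/ffunP => l; rewrite ffunE; case: eqP => // ->. Qed.

Lemma upd_upd (s : profile n) j x y : upd (upd s j x) j y = upd s j y.
Proof. by apply/ffunP => l; rewrite !ffunE; case: eqP. Qed.

Lemma upd_at (s : profile n) i x : upd s i x i = x.
Proof. by rewrite ffunE eqxx. Qed.

Lemma upd_same (s : profile n) i j x : j != i -> upd s i x j = s j.
Proof. by move=> h; rewrite ffunE (negbTE h). Qed.

Lemma upd_in_range (s : profile n) j x :
  in_range k s -> (x < k)%N -> in_range k (upd s j x).
Proof. by move=> hs hx l; rewrite ffunE; case: eqP. Qed.

Definition splice (z t : profile n) (S : {set 'I_n}) : profile n :=
  [ffun j => if j \in S then t j else z j].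

Lemma splice_in_range (z t : profile n) S :
  in_range k z -> in_range k t -> in_range k (splice z t S).
Proof. by move=> hz ht l; rewrite ffunE; case: ifP. Qed.

Lemma splice_le (z t : profile n) (S S' : {set 'I_n}) :
  (forall l, z l <= t l)%N -> S \subset S' ->
  forall l, (splice z t S l <= splice z t S' l)%N.
Proof.
move=> hzt hSS l; rewrite !ffunE.
by case: ifP => hl; [rewrite (subsetP hSS _ hl) | case: ifP].
Qed.

Lemma splice_setU1 (z t : profile n) S j :
  splice z t (j |: S) = upd (splice z t S) j (t j).
Proof. by apply/ffunP => l; rewrite !ffunE !inE; case: eqP => [->|]. Qed.

Lemma splice_set0 (z t : profile n) : splice z t set0 = z.
Proof. by apply/ffunP => l; rewrite ffunE inE. Qed.

Lemma splice_setT (z t : profile n) : splice z t [set: 'I_n] = t.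
Proof. by apply/ffunP => l; rewrite ffunE inE. Qed.

End Profiles.

Section Valuations.
Variables (R : realFieldType) (n m k : nat) (d : R) (v : valuation R n m).

Section Splicing.
Variables (z t : profile n).
Hypotheses (hz : in_range k z) (ht : in_range k t) (hzt : forall l, (z l <= t l)%N).

Lemma monotone_splice i T (S : {set 'I_n}) (r : seq 'I_n) : monotone_val k v ->
  v i T (splice z t S) <= v i T (splice z t ([set x in r] :|: S)).
Proof.
move=> hmono; elim: r => [|j r IH]; first by rewrite set0U lexx.
have -> : [set x in j :: r] :|: S = j |: ([set x in r] :|: S).
  by apply/setP => x; rewrite !inE orbA.
rewrite splice_setU1; apply: le_trans IH _.
set b := splice z t _; rewrite -{1}(upd_id b j).
apply: hmono; first exact: splice_in_range.
by rewrite ht andbT /b ffunE; case: ifP.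
Qed.

Lemma sos_splice i T (S S' : {set 'I_n}) (r : seq 'I_n) : SOS k d v ->
  uniq r -> S \subset S' -> (forall x, x \in r -> x \notin S') ->
  v i T (splice z t ([set x in r] :|: S')) - v i T (splice z t S') <=
  d * (v i T (splice z t ([set x in r] :|: S)) - v i T (splice z t S)).
Proof.
move=> hsos; elim: r => [|j r IH] /=.
  by move=> *; rewrite !set0U !subrr mulr0.
move=> /andP[hjr hr] hSS hout.
have eU : forall B, [set x in j :: r] :|: B = j |: ([set x in r] :|: B).
  by move=> B; apply/setP => x; rewrite !inE orbA.
rewrite !eU !splice_setU1.
have IH' := IH hr hSS (fun x hx => hout x (mem_behead (s := j :: r) hx)).
set b' := splice z t ([set x in r] :|: S') in IH' *.
set b := splice z t ([set x in r] :|: S) in IH' *.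
have hjS' : j \notin S' by apply: hout; rewrite inE eqxx.
have hjS : j \notin S by apply: contra hjS'; apply: (subsetP hSS).
have hb'j : b' j = z j by rewrite /b' ffunE !inE (negbTE hjS') (negbTE hjr).
have hbj : b j = z j by rewrite /b ffunE !inE (negbTE hjS) (negbTE hjr).
have step : v i T (upd b' j (t j)) - v i T b' <=
            d * (v i T (upd b j (t j)) - v i T b).
  rewrite -{2}(upd_id b' j) -{2}(upd_id b j) hb'j hbj.
  apply: hsos; try exact: splice_in_range.
  - by move=> l _; apply: splice_le => //; exact: setUS.
  - by rewrite hzt ht.
have := lerD IH' step; rewrite -mulrDr.
have telescope2 (x y w : R) : y - w + (x - y) = x - w by rewrite addrC addrA subrK.
by rewrite !telescope2.
Qed.

Lemma sos_splice_set i T (S S' D : {set 'I_n}) : SOS k d v ->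
  [disjoint D & S'] -> S \subset S' ->
  v i T (splice z t (D :|: S')) - v i T (splice z t S') <=
  d * (v i T (splice z t (D :|: S)) - v i T (splice z t S)).
Proof.
move=> hsos hdis hSS; rewrite -(set_enum D).
apply: sos_splice => //; first exact: enum_uniq.
by move=> x; rewrite mem_enum => hx; rewrite (disjointFr hdis hx).
Qed.

(* Two complementary blocks D, C: by d-SOS each block adds at most d times
   its stand-alone gain, whence 2 v(D ∪ C) <= (d+1) (v(D) + v(C)). *)
Lemma complementary_blocks i T (D C : {set 'I_n}) :
  0 <= d -> nonneg_val k v -> SOS k d v -> [disjoint D & C] ->
  2 * v i T (splice z t (D :|: C)) <=
  (d + 1) * (v i T (splice z t D) + v i T (splice z t C)).
Proof.
move=> hd hnn hsos hDC.
have h0 : 0 <= v i T (splice z t set0) by apply: hnn; exact: splice_in_range.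
have hD := sos_splice_set i T hsos hDC (sub0set C).
have hCD : [disjoint C & D] by rewrite disjoint_sym.
have hC := sos_splice_set i T hsos hCD (sub0set D).
rewrite !setU0 in hD hC; rewrite setUC in hC.
have hdf0 : 0 <= d * v i T (splice z t set0) by apply: mulr_ge0.
move: hD hC; rewrite !mulrBr => hD hC.
rewrite mulrDl mulrDr mul1r; lra.
Qed.

End Splicing.

Lemma monotone_profile i T (p q : profile n) : monotone_val k v ->
  in_range k p -> in_range k q -> (forall l, (p l <= q l)%N) ->
  v i T p <= v i T q.
Proof.
move=> hmono hp hq hpq.
have := monotone_splice hp hq hpq i T set0 (enum [set: 'I_n]) hmono.
by rewrite set_enum setU0 splice_set0 splice_setT.
Qed.

End Valuations.

Lemma telescope_upto (V : zmodType) (h : nat -> V) (k x : nat) : (x < k)%N ->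
  \sum_(1 <= l < k) (if (l <= x)%N then h l - h l.-1 else 0) = h x - h 0%N.
Proof.
move=> hx; rewrite (@big_cat_nat _ _ _ x.+1) //=.
rewrite [X in _ + X]big_nat_cond [X in _ + X]big1 ?addr0; last first.
  by move=> l /andP[/andP[hl _] _]; rewrite leqNgt hl.
rewrite (@telescope_sumr_eq _ 1 x.+1 (fun l => h l.-1)) //.
by move=> l /andP[_ hl]; rewrite -ltnS hl.
Qed.

Definition toggle (T : finType) (i : T) (A : {set T}) : {set T} :=
  if i \in A then A :\ i else i |: A.

Lemma toggleK (T : finType) (i : T) : involutive (toggle i).
Proof.
move=> A; rewrite /toggle; case: (boolP (i \in A)) => hA; rewrite !inE eqxx /=.
  by apply/setP => x; rewrite !inE; case: eqP => // ->.
by apply/setP => x; rewrite !inE; case: eqP => // ->; rewrite (negbTE hA).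
Qed.

Lemma sum_avoiding_containing (T : finType) (V : nmodType) (i : T)
    (f : {set T} -> V) :
  \sum_(A : {set T}) (if i \notin A then f (A :\ i) else 0) =
  \sum_(A : {set T}) (if i \in A then f (A :\ i) else 0).
Proof.
rewrite (reindex_inj (inv_inj (toggleK i))); apply: eq_bigr => A _.
rewrite /toggle; case: (boolP (i \in A)) => hA; rewrite !inE ?eqxx //=.
by congr f; apply/setP => x; rewrite !inE; case: (x == i).
Qed.

Lemma card_subsets (n : nat) : #|{set 'I_n}| = (2 ^ n)%N.
Proof.
have -> : (2 ^ n = 2 ^ #|[set: 'I_n]|)%N by rewrite cardsT card_ord.
rewrite -card_powerset -cardsT; apply: eq_card => A.
by rewrite !inE subsetT.
Qed.

Section Mechanisms.
Variables (R : realFieldType) (n m k : nat) (v : valuation R n m).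
Variable sel : selector R n m.
Hypothesis hsel : welfare_maximizer sel.

Lemma sel_out (N : {set 'I_n}) u i : i \notin N -> sel N u i = set0.
Proof. by move=> hi; have [[h _] _] := hsel N u; exact: h. Qed.

Definition restrict (X : allocation n m) (N : {set 'I_n}) : allocation n m :=
  [ffun i => if i \in N then X i else set0].

Lemma restrict_feasible (X : allocation n m) N :
  feasible [set: 'I_n] X -> feasible N (restrict X N).
Proof.
move=> [_ hX]; split; first by move=> i hi; rewrite ffunE (negbTE hi).
move=> i j hij; rewrite !ffunE.
by case: ifP => _; case: ifP => _; rewrite ?hX // -setI_eq0 ?setI0 ?set0I.
Qed.

Lemma maximizer_dominates (N : {set 'I_n}) (u w : 'I_n -> {set 'I_m} -> R)
    (X : allocation n m) :
  feasible [set: 'I_n] X -> (forall i T, u i T <= w i T) ->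
  \sum_i (if i \in N then u i (X i) else u i set0) <= welfare w (sel N u).
Proof.
move=> hX huw; have [_ hmax] := hsel N u.
have -> : \sum_i (if i \in N then u i (X i) else u i set0) =
          welfare u (restrict X N).
  by apply: eq_bigr => i _; rewrite ffunE; case: ifP.
apply: le_trans (hmax _ (restrict_feasible N hX)) _.
by apply: ler_sum => i _.
Qed.

Definition threshold_profile (l : nat) (s : profile n) : profile n :=
  [ffun j => if (l <= s j)%N then l else s j].

Lemma threshold_alloc_upd l (s : profile n) i x : (l <= x)%N -> (l <= s i)%N ->
  (random_threshold sel v l (upd s i x)).1 = (random_threshold sel v l s).1.
Proof.
move=> hx hs; rewrite /random_threshold /=.
have eN : [set j | (l <= upd s i x j)%N] = [set j | (l <= s j)%N].
  apply/setP => j; rewrite !inE; case: (eqVneq j i) => [->|hj].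
    by rewrite upd_at hx hs.
  by rewrite upd_same.
have ep : threshold_profile l (upd s i x) = threshold_profile l s.
  apply/ffunP => j; rewrite !ffunE; case: (eqVneq j i) => [->|//].
  by rewrite hx hs.
by move: ep; rewrite /threshold_profile => ->; rewrite eN.
Qed.

Lemma threshold_utility_in l (s r : profile n) i : (l <= r i)%N ->
  utility v s i (random_threshold sel v l r) =
  v i ((random_threshold sel v l r).1 i) s -
  v i ((random_threshold sel v l r).1 i) (upd r i l.-1).
Proof. by move=> h; rewrite /utility /= ffunE inE h. Qed.

Lemma threshold_utility_out l (s r : profile n) i : empty_zero v ->
  (r i < l)%N -> utility v s i (random_threshold sel v l r) = 0.
Proof.
move=> he h; rewrite /utility /= ffunE inE leqNgt h sel_out ?inE -?ltnNge //.
by rewrite he subr0.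
Qed.

Lemma threshold_IC_IR l : empty_zero v -> monotone_val k v -> (1 <= l < k)%N ->
  ex_post_IC_IR k v (random_threshold sel v l).
Proof.
move=> he hmono /andP[hl1 hlk] s hs i.
have hl1r : (l.-1 < k)%N by lia.
have report x : (x < l)%N -> utility v s i (random_threshold sel v l (upd s i x)) = 0.
  by move=> hx; rewrite threshold_utility_out ?upd_at.
case: (leqP l (s i)) => hsi.
- (* truthful agent is served and pays v(s_{-i}, l-1) <= v(s) *)
  have ir : 0 <= utility v s i (random_threshold sel v l s).
    rewrite threshold_utility_in // subr_ge0.
    rewrite -[X in _ <= v _ _ X](upd_id s i); apply: hmono => //.
    by rewrite hs; lia.
  split => // x hx; case: (leqP l x) => hlx; last by rewrite report.
  by rewrite threshold_utility_in ?upd_at // threshold_alloc_upd // upd_upd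
    -threshold_utility_in.
- (* truthful agent is not served; any winning report pays v(s_{-i}, l-1) >= v(s) *)
  rewrite threshold_utility_out //; split => // x hx.
  case: (leqP l x) => hlx; last by rewrite report.
  rewrite threshold_utility_in ?upd_at // upd_upd subr_le0.
  rewrite -[X in v _ _ X <= _](upd_id s i); apply: hmono => //.
  by rewrite hl1r; lia.
Qed.

(* Random Sampling never charges and ignores the reports of the agents it
   may serve. *)
Lemma sampling_IC_IR A : nonneg_val k v ->
  ex_post_IC_IR k v (random_sampling sel v A).
Proof.
move=> hnn s hs i.
have u_eq r : utility v s i (random_sampling sel v A r) =
              v i ((random_sampling sel v A r).1 i) s.
  by rewrite /utility /= ffunE subr0.
split; first by rewrite u_eq; apply: hnn.
move=> x hx; rewrite !u_eq.
case: (boolP (i \in A)) => hiA; first by rewrite /= !sel_out ?inE ?hiA.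
rewrite /=; suff -> : [ffun j => if j \in A then upd s i x j else 0%N] =
                      [ffun j => if j \in A then s j else 0%N] :> profile n by [].
apply/ffunP => j; rewrite !ffunE; case: ifP => // hj.
by rewrite (negbTE (_ : j != i)) //; apply: contraNneq hiA => <-.
Qed.

End Mechanisms.

Section Welfare.
Variables (R : realFieldType) (n m k : nat) (d : R) (v : valuation R n m).
Variable sel : selector R n m.
Hypotheses (hsel : welfare_maximizer sel) (hd : 0 <= d) (hnn : nonneg_val k v)
  (hmono : monotone_val k v) (hsos : SOS k d v).

(* d-SOS with the others' signals lowered to the threshold profile: raising
   s_i from l-1 to l gains at most d times i's value in the capped profile. *)
Lemma threshold_increment l (s : profile n) i T :
  (1 <= l < k)%N -> in_range k s -> (l <= s i)%N ->
  v i T (upd s i l) - v i T (upd s i l.-1) <=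
  d * v i T (threshold_profile l s).
Proof.
move=> /andP[hl1 hlk] hs hsi.
set p := threshold_profile l s.
have hp : in_range k p by move=> j; rewrite ffunE; case: ifP => //; lia.
have hps j : (p j <= s j)%N by rewrite ffunE; case: ifP.
have hpi : upd p i l = p by rewrite -[in RHS](upd_id p i) ffunE hsi.
have hl' : (l.-1 <= l < k)%N by lia.
apply: le_trans (hsos i T (s := s) (s' := p) (j := i) hs hp (fun j _ => hps j) hl') _.
rewrite hpi ler_wpM2l // lerBlDr lerDl; apply: hnn; apply: upd_in_range => //.
by lia.
Qed.

Lemma threshold_bound l (s : profile n) (X : allocation n m) :
  (1 <= l < k)%N -> in_range k s -> feasible [set: 'I_n] X ->
  \sum_i (if (l <= s i)%N then v i (X i) (upd s i l) - v i (X i) (upd s i l.-1)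
          else 0)
  <= d * social_welfare v s (random_threshold sel v l s).
Proof.
move=> hl hs hX.
have hlk : (l < k)%N by case/andP: hl.
set p := threshold_profile l s.
have hp : in_range k p by move=> j; rewrite ffunE; case: ifP => //; lia.
have hps j : (p j <= s j)%N by rewrite ffunE; case: ifP.
set N := [set j | (l <= s j)%N].
set vb := fun j T => if j \in N then v j T p else 0.
apply: le_trans (_ : d * \sum_i (if i \in N then vb i (X i) else vb i set0) <= _).
  rewrite mulr_sumr; apply: ler_sum => i _; rewrite /vb inE.
  by case: ifP => hi; [exact: (threshold_increment (X i) hl hs hi) | rewrite mulr0].
apply: (ler_wpM2l hd).
apply: (@maximizer_dominates _ _ _ _ hsel _ _ (fun i T => v i T s)) => // i T.
rewrite /vb; case: ifP => _; last exact: hnn.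
exact: (monotone_profile i T hmono hp hs hps).
Qed.

(* Own parts: telescoping over the thresholds. *)
Lemma own_part_bound (s : profile n) (X : allocation n m) :
  in_range k s -> feasible [set: 'I_n] X ->
  \sum_i (v i (X i) s - v i (X i) (upd s i 0)) <=
  d * \sum_(1 <= l < k) social_welfare v s (random_threshold sel v l s).
Proof.
move=> hs hX; rewrite mulr_sumr.
apply: le_trans (ler_sum_nat (fun l hl => threshold_bound hl hs hX)).
rewrite exchange_big /=; apply: ler_sum => i _.
by rewrite (telescope_upto (fun l => v i (X i) (upd s i l)) (hs i)) /= upd_id.
Qed.

Definition zero_profile : profile n := [ffun => 0%N].

(* Random Sampling evaluates on the sampled signals, zero elsewhere. *)
Lemma sampling_bound (A : {set 'I_n}) (s : profile n) (X : allocation n m) :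
  in_range k s -> feasible [set: 'I_n] X ->
  \sum_i (if i \in ~: A then v i (X i) (splice zero_profile s A) else 0)
  <= social_welfare v s (random_sampling sel v A s).
Proof.
move=> hs hX.
have eq_sample : [ffun j => if j \in A then s j else 0%N] =
                 splice zero_profile s A :> profile n.
  by apply/ffunP => j; rewrite !ffunE.
have hq : in_range k (splice zero_profile s A).
  by apply: splice_in_range => // j; rewrite ffunE; have := hs j; lia.
rewrite /social_welfare /random_sampling /= eq_sample.
set vt := fun j T => if j \in ~: A then v j T (splice zero_profile s A) else 0.
apply: le_trans (_ : \sum_i (if i \in ~: A then vt i (X i) else vt i set0) <= _).
  by apply: ler_sum => i _; rewrite /vt; case: ifP.
apply: (@maximizer_dominates _ _ _ _ hsel _ _ (fun i T => v i T s)) => // i T.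
rewrite /vt; case: ifP => _; last exact: hnn.
by apply: (monotone_profile i T hmono hq hs) => j; rewrite !ffunE; case: ifP.
Qed.
(* Base of agent i: pairing each sample A with its complement, the two
   halves A \ i and ~A \ i of the other agents satisfy
   [complementary_blocks]; averaging over A bounds the base by the value of i
   over the samples that leave i unsampled. *)
Lemma agent_base_bound (s : profile n) i T : in_range k s ->
  (2 * v i T (upd s i 0)) *+ 2 ^ n <=
  (d + 1) * (4 * \sum_(A : {set 'I_n})
                   (if i \in ~: A then v i T (splice zero_profile s A) else 0)).
Proof.
move=> hs.
have hz : in_range k zero_profile by move=> j; rewrite ffunE; have := hs i; lia.
have hzs j : (zero_profile j <= s j)%N by rewrite ffunE.
set g := fun A : {set 'I_n} => v i T (splice zero_profile s (A :\ i)).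
have pair A : 2 * v i T (upd s i 0) <= (d + 1) * (g A + g (~: A)).
  have -> : upd s i 0 = splice zero_profile s (A :\ i :|: ~: A :\ i).
    apply/ffunP => j; rewrite !ffunE !inE.
    by case: eqP => // _; case: (j \in A).
  apply: complementary_blocks => //.
  by rewrite -setI_eq0; apply/eqP/setP => x; rewrite !inE; case: (x \in A); rewrite !andbF.
have avoid : \sum_(A : {set 'I_n})
      (if i \in ~: A then v i T (splice zero_profile s A) else 0) =
    \sum_(A : {set 'I_n}) (if i \notin A then g A else 0).
  apply: eq_bigr => A _; rewrite inE; case: ifP => // hiA.
  rewrite /g; congr (v _ _ (splice _ _ _)); apply/setP => x; rewrite !inE.
  by case: eqP => // ->; rewrite (negbTE hiA).
have split_at_i : \sum_(A : {set 'I_n}) g A =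
    \sum_(A : {set 'I_n}) (if i \notin A then g A else 0) +
    \sum_(A : {set 'I_n}) (if i \in A then g A else 0).
  rewrite -big_split; apply: eq_bigr => A _.
  by case: (i \in A); rewrite /= ?add0r ?addr0.
have sym : \sum_(A : {set 'I_n}) (if i \notin A then g A else 0) =
           \sum_(A : {set 'I_n}) (if i \in A then g A else 0).
  exact: (sum_avoiding_containing i (fun B => v i T (splice zero_profile s B))).
have compl : \sum_(A : {set 'I_n}) g A = \sum_(A : {set 'I_n}) g (~: A).
  by rewrite [LHS](reindex_inj (@setC_inj _)).
have -> : 4 * \sum_(A : {set 'I_n}) (if i \in ~: A then v i T (splice zero_profile s A) else 0)
        = \sum_(A : {set 'I_n}) (g A + g (~: A)).
  rewrite avoid big_split /= -compl split_at_i.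
  rewrite -sym; lra.
rewrite mulr_sumr -card_subsets -sumr_const.
by apply: ler_sum => A _; apply: pair.
Qed.

Lemma base_part_bound (s : profile n) (X : allocation n m) :
  in_range k s -> feasible [set: 'I_n] X ->
  (2 * \sum_i v i (X i) (upd s i 0)) *+ 2 ^ n <=
  (d + 1) * (4 * \sum_(A : {set 'I_n})
                   social_welfare v s (random_sampling sel v A s)).
Proof.
move=> hs hX; rewrite mulr_sumr -sumrMnl.
have per_agent : \sum_i ((2 * v i (X i) (upd s i 0)) *+ 2 ^ n) <=
    \sum_i ((d + 1) * (4 * \sum_(A : {set 'I_n})
       (if i \in ~: A then v i (X i) (splice zero_profile s A) else 0))).
  by apply: ler_sum => i _; exact: agent_base_bound.
apply: le_trans per_agent _; rewrite -mulr_sumr; apply: ler_wpM2l; first by rewrite addr_ge0.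
rewrite -mulr_sumr; apply: ler_wpM2l => //.
rewrite exchange_big /=; apply: ler_sum => A _.
exact: sampling_bound.
Qed.

End Welfare.

(* The arithmetic of the mixture: with K = k-1 thresholds, N = 2^n samples,
   own parts a <= d RT and bases 2 b N <= 4 (d+1) RS, the optimum a + b is at
   most (d(K+2)+2) times the expected welfare of the mixture. *)
Lemma mixture_ratio (R : realFieldType) (K N d RT RS a b : R) :
  0 < K -> 0 < N -> 0 < d -> a <= d * RT -> 2 * b * N <= (d + 1) * (4 * RS) ->
  a + b <= (d * (K + 2) + 2) *
    (K * d / (d * (K + 2) + 2) * (K^-1 * RT) +
     (1 - K * d / (d * (K + 2) + 2)) * (N^-1 * RS)).
Proof.
move=> hK hN hd ha hb.
have hD : 0 < d * (K + 2) + 2.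
  by apply: addr_gt0 => //; apply: mulr_gt0 => //; apply: addr_gt0.
have -> : (d * (K + 2) + 2) *
    (K * d / (d * (K + 2) + 2) * (K^-1 * RT) +
     (1 - K * d / (d * (K + 2) + 2)) * (N^-1 * RS)) =
    d * RT + (2 * d + 2) / N * RS.
  by field; rewrite !gt_eqF.
apply: lerD => //; rewrite -subr_ge0.
have -> : (2 * d + 2) / N * RS - b = ((d + 1) * (4 * RS) - 2 * b * N) / (2 * N).
  by field; rewrite gt_eqF.
by apply: divr_ge0; rewrite ?subr_ge0 // mulr_ge0 // ltW.
Qed.

Theorem mainTheorem15 (R : realFieldType) (n m k : nat) (d : R)
    (v : valuation R n m) (sel : selector R n m) :
  (2 <= k)%N -> 1 <= d ->
  nonneg_val k v -> empty_zero v -> monotone_val k v -> strict_own k v ->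
  SOS k d v -> welfare_maximizer sel ->
  (* universally ex-post IC-IR: every deterministic mechanism in the support *)
  (forall l, (1 <= l < k)%N -> ex_post_IC_IR k v (random_threshold sel v l)) /\
  (forall A, ex_post_IC_IR k v (random_sampling sel v A)) /\
  (* (d(k+1)+2)-approximation to the optimal social welfare *)
  (forall s, in_range k s -> forall X, feasible [set: 'I_n] X ->
     welfare (fun i T => v i T s) X <=
       (d * (k.+1)%:R + 2) * expected_welfare sel v k d s).
Proof.
move=> hk hd hnn he hmono _ hsos hsel.
have hd_pos : 0 < d by apply: lt_le_trans hd; exact: ltr01.
split; [|split].
- by move=> l hl; exact: threshold_IC_IR.
- by move=> A; exact: sampling_IC_IR.
move=> s hs X hX.
(* split each agent's value into own part and base *)
have -> : welfare (fun i T => v i T s) X =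
    \sum_i (v i (X i) s - v i (X i) (upd s i 0)) + \sum_i v i (X i) (upd s i 0).
  by rewrite -big_split; apply: eq_bigr => i _; rewrite /= subrK.
rewrite /expected_welfare /prob_RT.
have -> : (k.+1)%:R = (k.-1)%:R + 2 :> R by rewrite -natrD; congr _%:R; lia.
apply: mixture_ratio => //.
- by rewrite ltr0n; lia.
- exact: exprn_gt0.
- exact: (own_part_bound hsel (ltW hd_pos)).
- rewrite -natrX mulr_natr.
  exact: (base_part_bound hsel (ltW hd_pos) hnn hmono hsos hs hX).
Qed.
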